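(* Assume CH. Then there is no separable regular Baire $\sigma$-space $X$ with $dis(X)<\Delta(X)$.
   Context: All spaces are Hausdorff. CH is the Continuum Hypothesis $2^{\aleph_0}=\aleph_1$. $dis(X)$ is the least number of discrete subspaces needed to cover $X$; $\Delta(X)$ is the least cardinality of a non-empty open subset of $X$. A $\sigma$-space is a space having a $\sigma$-discrete network (a network being a family $\mathcal{N}$ of subsets such that for every open $U$ and $x\in U$ there is $N\in\mathcal{N}$ with $x\in N\subseteq U$). *)

From Stdlib Require Import Classical.

Set Implicit Arguments.

Record topology (X : Type) := Topology {
  is_open : (X -> Prop) -> Prop;
  open_full : is_open (fun _ => True);
  open_inter : forall U V, is_open U -> is_open V -> is_open (fun x => U x /\ V x);
  open_union : forall F : (X -> Prop) -> Prop,
      (forall U, F U -> is_open U) -> is_open (fun x => exists U, F U /\ U x)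
}.

Section Topo.
Context {X : Type} (T : topology X).

Definition is_closed (F : X -> Prop) : Prop := is_open T (fun x => ~ F x).

Definition hausdorff : Prop :=
  forall x y : X, x <> y -> exists U V, is_open T U /\ is_open T V /\ U x /\ V y /\
    (forall z, U z -> V z -> False).

Definition regular : Prop :=
  hausdorff /\
  forall (F : X -> Prop) (x : X), is_closed F -> ~ F x ->
    exists U V, is_open T U /\ is_open T V /\ U x /\ (forall z, F z -> V z) /\
      (forall z, U z -> V z -> False).

Definition countable_set (D : X -> Prop) : Prop :=
  exists f : X -> nat, forall x y, D x -> D y -> f x = f y -> x = y.

Definition dense (D : X -> Prop) : Prop :=
  forall U, is_open T U -> (exists x, U x) -> exists x, U x /\ D x.

Definition separable : Prop := exists D, countable_set D /\ dense D.

Definition baire : Prop :=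
  forall U : nat -> X -> Prop, (forall n, is_open T (U n) /\ dense (U n)) ->
    dense (fun x => forall n, U n x).

Definition discrete_family (N : (X -> Prop) -> Prop) : Prop :=
  forall x, exists V, is_open T V /\ V x /\
    forall A B, N A -> N B -> (exists y, V y /\ A y) -> (exists y, V y /\ B y) ->
      forall z, A z <-> B z.

Definition network (N : (X -> Prop) -> Prop) : Prop :=
  forall U x, is_open T U -> U x -> exists A, N A /\ A x /\ forall z, A z -> U z.

Definition sigma_space : Prop :=
  exists N : nat -> (X -> Prop) -> Prop,
    (forall n, discrete_family (N n)) /\ network (fun A => exists n, N n A).

Definition discrete_subspace (D : X -> Prop) : Prop :=
  forall x, D x -> exists V, is_open T V /\ V x /\ forall y, V y -> D y -> y = x.

Definition card_lt_set (I : Type) (U : X -> Prop) : Prop :=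
  (exists f : I -> X, (forall i, U (f i)) /\ forall i j, f i = f j -> i = j) /\
  ~ (exists g : X -> I, forall x y, U x -> U y -> g x = g y -> x = y).

(** dis(X) < Δ(X): X is covered by a family of discrete subspaces indexed by
    some I whose cardinality is strictly below the cardinality of every
    non-empty open set.  (Since cardinals are well-ordered, this is exactly
    "min #discrete cover < min |U| over nonempty open U".) *)
Definition dis_lt_Delta : Prop :=
  exists (I : Type) (D : I -> X -> Prop),
    (forall i, discrete_subspace (D i)) /\
    (forall x, exists i, D i x) /\
    (forall U, is_open T U -> (exists x, U x) -> card_lt_set I U).

End Topo.

(** CH: every subset of 2^ω is countable or equinumerous (has an injection
    from) 2^ω; i.e. 2^{ℵ0} = ℵ1. *)
Definition CH : Prop :=
  forall A : (nat -> bool) -> Prop,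
    (exists f : (nat -> bool) -> nat, forall x y, A x -> A y -> f x = f y -> x = y) \/
    (exists g : (nat -> bool) -> (nat -> bool),
        (forall x, A (g x)) /\ forall x y, g x = g y -> x = y).

(* Let D : J -> (X -> Prop) be a cover of X by discrete subspaces such that
   |J| < |U| for every non-empty open U.  The proof splits on the size of J.

   1. A regular separable σ-space has at most continuum many points: with a
      σ-discrete network (N n)_n and a countable dense set Q, a point x is
      determined by the countably many facts "x lies in a member of N n" and
      "q lies in W_n(x)" (q in Q), where W_n(x) is an open neighbourhood of x
      whose closure meets at most one member of N n.
   2. If J is countable, each D i splits into the countably many pieces of
      points isolated in D i by a member of N n; each piece is closed discrete,
      hence (X having no isolated points, since |U| > |J| >= 1) has a dense
      open complement.  X would then be a countable union of nowhere dense
      sets, contradicting the Baire property.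
   3. If J is uncountable then, by CH applied to the image of J in Cantor
      space, J contains a copy of the continuum, hence of X by step 1,
      contradicting |J| < |X|. *)

From Stdlib Require Import Classical ClassicalEpsilon FunctionalExtensionality
  PropExtensionality Cantor FinFun.

Set Implicit Arguments.
Unset Strict Implicit.

Section Topology.
Context {X : Type} (T : topology X).

Lemma open_ext (P Q : X -> Prop) :
  is_open T P -> (forall x, P x <-> Q x) -> is_open T Q.
Proof.
  intros HP HPQ.
  assert (E : P = Q).
  { apply functional_extensionality; intro x; apply propositional_extensionality; auto. }
  now subst.
Qed.

Lemma open_of_local (P : X -> Prop) :
  (forall x, P x -> exists O, is_open T O /\ O x /\ forall z, O z -> P z) ->
  is_open T P.
Proof.
  intros Hloc.
  apply open_ext with (fun x => exists U, (is_open T U /\ forall z, U z -> P z) /\ U x).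
  - apply open_union. now intros U [HU _].
  - intro x; split.
    + intros [U [[_ HUP] Ux]]; auto.
    + intros Px. destruct (Hloc x Px) as [O [HO [Ox HOP]]]. exists O; auto.
Qed.

Definition in_closure (A : X -> Prop) (y : X) : Prop :=
  forall V, is_open T V -> V y -> exists z, V z /\ A z.

Lemma in_closure_of_dense_trace (Q A W : X -> Prop) (y : X) :
  dense T Q -> is_open T W -> W y -> (forall q, Q q -> W q -> A q) ->
  in_closure A y.
Proof.
  intros HQ HW Wy HWA V HV Vy.
  destruct (HQ (fun z => V z /\ W z)) as [q [[Vq Wq] Qq]].
  - now apply open_inter.
  - now exists y.
  - exists q; auto.
Qed.

Lemma regular_shrink (O : X -> Prop) (x : X) :
  regular T -> is_open T O -> O x ->
  exists W, is_open T W /\ W x /\ forall y, in_closure W y -> O y.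
Proof.
  intros [_ Hsep] HO Ox.
  destruct (Hsep (fun z => ~ O z) x) as [U [V [HU [HV [Ux [CV HUV]]]]]].
  - apply open_ext with O; [exact HO|].
    intro z; split; [tauto | apply NNPP].
  - tauto.
  - exists U; split; [exact HU|]; split; [exact Ux|].
    intros y Hy. apply NNPP; intro Ny.
    destruct (Hy V HV (CV y Ny)) as [z [Vz Uz]].
    exact (HUV z Uz Vz).
Qed.

Definition closure_isolating (F : (X -> Prop) -> Prop) (x : X) (W : X -> Prop) : Prop :=
  is_open T W /\ W x /\
  forall A B, F A -> F B ->
    (exists y, in_closure W y /\ A y) -> (exists y, in_closure W y /\ B y) ->
    forall z, A z <-> B z.

Lemma closure_isolating_exists (F : (X -> Prop) -> Prop) (x : X) :
  regular T -> discrete_family T F -> exists W, closure_isolating F x W.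
Proof.
  intros Hreg HF.
  destruct (HF x) as [V [HV [Vx HVF]]].
  destruct (regular_shrink Hreg HV Vx) as [W [HW [Wx WV]]].
  exists W; split; [exact HW|]; split; [exact Wx|].
  intros A B FA FB [a [Wa Aa]] [b [Wb Bb]].
  apply HVF; eauto.
Qed.

Lemma closure_isolating_same_member (F : (X -> Prop) -> Prop) (Q Wx Wy A A' : X -> Prop)
    (x y : X) :
  dense T Q -> closure_isolating F x Wx -> is_open T Wy -> Wy y ->
  (forall q, Q q -> Wy q -> Wx q) ->
  F A -> A x -> F A' -> A' y -> A y.
Proof.
  intros HQ [HWx [Wxx HWxF]] HWy Wyy Htrace FA Ax FA' A'y.
  assert (Hy : in_closure Wx y) by exact (in_closure_of_dense_trace HQ HWy Wyy Htrace).
  assert (Hx : in_closure Wx x) by (intros V _ Vx; exists x; auto).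
  apply (HWxF A' A FA' FA); eauto.
Qed.

Lemma separating_family_injection (P : nat -> nat -> X -> Prop) :
  (forall x y, (forall n k, P n k x <-> P n k y) -> x = y) ->
  exists c : X -> nat -> bool, Injective c.
Proof.
  intros Hsep.
  pose (decide := fun p : Prop => if excluded_middle_informative p then true else false).
  exists (fun x m => decide (P (fst (Cantor.of_nat m)) (snd (Cantor.of_nat m)) x)).
  intros x y Hxy. apply Hsep. intros n k.
  pose proof (f_equal (fun c => c (Cantor.to_nat (n, k))) Hxy) as Hnk.
  cbn beta in Hnk. rewrite Cantor.cancel_of_to in Hnk. cbn in Hnk. unfold decide in Hnk.
  destruct (excluded_middle_informative (P n k x)),
           (excluded_middle_informative (P n k y)); try discriminate; tauto.
Qed.

Lemma sigma_space_card_le_continuum :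
  regular T -> separable T -> sigma_space T -> exists c : X -> nat -> bool, Injective c.
Proof.
  intros Hreg [Q [[e He] HQ]] [N [HN Hnet]].
  destruct (choice (fun (p : nat * X) W => closure_isolating (N (fst p)) (snd p) W))
    as [W HW].
  { intros [n x]. now apply closure_isolating_exists. }
  (* The coordinates of x: (n, 0) records whether x meets the family N n,
     (n, k+1) whether the k-th point of Q lies in W (n, x). *)
  apply separating_family_injection with (fun n k x =>
    match k with
    | 0 => exists A, N n A /\ A x
    | S k => exists q, Q q /\ W (n, x) q /\ e q = k
    end).
  intros x y Hxy. apply NNPP; intro Hne.
  destruct Hreg as [Hhaus _].
  destruct (Hhaus x y Hne) as [U [V [HU [HV [Ux [Vy HUV]]]]]].
  destruct (Hnet U x HU Ux) as [A [[n NA] [Ax AU]]].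
  destruct (proj1 (Hxy n 0) (ex_intro _ A (conj NA Ax))) as [A' [NA' A'y]].
  assert (Htrace : forall q, Q q -> W (n, y) q -> W (n, x) q).
  { intros q Qq Wq.
    destruct (proj2 (Hxy n (S (e q))) (ex_intro _ q (conj Qq (conj Wq eq_refl))))
      as [q' [Qq' [Wq' Heq]]].
    now rewrite <- (He q' q Qq' Qq Heq). }
  destruct (HW (n, y)) as [HWy [Wyy _]].
  apply (HUV y); [apply AU |exact Vy].
  exact (closure_isolating_same_member HQ (HW (n, x)) HWy Wyy Htrace NA Ax NA' A'y).
Qed.

Definition closed_discrete (S : X -> Prop) : Prop :=
  forall z, exists V, is_open T V /\ V z /\
    forall y1 y2, V y1 -> V y2 -> S y1 -> S y2 -> y1 = y2.

Definition crowded : Prop :=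
  forall U, is_open T U -> (exists x, U x) -> exists y z, U y /\ U z /\ y <> z.

Lemma closed_discrete_complement_open (S : X -> Prop) :
  hausdorff T -> closed_discrete S -> is_open T (fun x => ~ S x).
Proof.
  intros Hhaus HS. apply open_of_local. intros x Sx.
  destruct (HS x) as [V [HV [Vx HVS]]].
  destruct (classic (exists y, V y /\ S y)) as [[y [Vy Sy]] | Hno].
  - assert (Hne : x <> y) by (intro; subst; auto).
    destruct (Hhaus x y Hne) as [P [P' [HP [HP' [Px [P'y HPP']]]]]].
    exists (fun z => V z /\ P z); split; [now apply open_inter|]; split; [auto|].
    intros z [Vz Pz] Sz.
    assert (z = y) by (apply HVS; auto). subst z.
    exact (HPP' y Pz P'y).
  - exists V; split; [exact HV|]; split; [exact Vx|].
    intros z Vz Sz. apply Hno; eauto.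
Qed.

Lemma closed_discrete_complement_dense (S : X -> Prop) :
  crowded -> closed_discrete S -> dense T (fun x => ~ S x).
Proof.
  intros Hcrowd HS U HU [u Uu].
  destruct (HS u) as [V [HV [Vu HVS]]].
  destruct (Hcrowd (fun x => U x /\ V x)) as [y [z [[Uy Vy] [[Uz Vz] Hyz]]]].
  - now apply open_inter.
  - exists u; auto.
  - destruct (classic (S y)) as [Sy | Sy]; [| exists y; auto].
    destruct (classic (S z)) as [Sz | Sz]; [| exists z; auto].
    exfalso; apply Hyz; auto.
Qed.

Lemma closed_discrete_fibre_union (K : Type) (k : K -> nat) (S : K -> X -> Prop) (m : nat) :
  Injective k -> (forall a, closed_discrete (S a)) ->
  closed_discrete (fun x => exists a, k a = m /\ S a x).
Proof.
  intros Hk HS z.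
  destruct (classic (exists a, k a = m)) as [[a Ha] | Hno].
  - destruct (HS a z) as [V [HV [Vz HVS]]].
    exists V; split; [exact HV|]; split; [exact Vz|].
    intros y1 y2 V1 V2 [a1 [Ha1 S1]] [a2 [Ha2 S2]].
    assert (a1 = a) by (apply Hk; congruence).
    assert (a2 = a) by (apply Hk; congruence).
    subst a1 a2. auto.
  - exists (fun _ => True); split; [apply open_full|]; split; [exact I|].
    intros y1 y2 _ _ [a1 [Ha1 _]]. exfalso; eauto.
Qed.

Lemma baire_no_countable_closed_discrete_cover (K : Type) (k : K -> nat) (S : K -> X -> Prop) :
  hausdorff T -> baire T -> crowded -> inhabited X ->
  Injective k -> (forall a, closed_discrete (S a)) -> ~ (forall x, exists a, S a x).
Proof.
  intros Hhaus Hbaire Hcrowd [x0] Hk HS Hcov.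
  pose (G := fun m x => exists a, k a = m /\ S a x).
  assert (HG : forall m, closed_discrete (G m))
    by (intro m; exact (closed_discrete_fibre_union m Hk HS)).
  destruct (Hbaire (fun m x => ~ G m x)
             (fun m => conj (closed_discrete_complement_open Hhaus (HG m))
                            (closed_discrete_complement_dense Hcrowd (HG m)))
             (fun _ => True) (open_full T) (ex_intro _ x0 I)) as [x [_ Hx]].
  destruct (Hcov x) as [a Sa].
  exact (Hx (k a) (ex_intro _ a (conj eq_refl Sa))).
Qed.

Definition isolated_by (F : (X -> Prop) -> Prop) (D : X -> Prop) (x : X) : Prop :=
  D x /\ exists A, F A /\ A x /\ forall z, A z -> D z -> z = x.

(* Distinct points isolated by members of a discrete family are isolated by
   distinct members, so they form a closed discrete set. *)
Lemma isolated_by_closed_discrete (F : (X -> Prop) -> Prop) (D : X -> Prop) :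
  discrete_family T F -> closed_discrete (isolated_by F D).
Proof.
  intros HF z.
  destruct (HF z) as [V [HV [Vz HVF]]].
  exists V; split; [exact HV|]; split; [exact Vz|].
  intros y1 y2 V1 V2 [D1 [A1 [FA1 [A1y1 HA1]]]] [D2 [A2 [FA2 [A2y2 HA2]]]].
  symmetry. apply HA1; [| exact D2].
  apply (HVF A2 A1 FA2 FA1); [exists y2 | exists y1 | ]; auto.
Qed.

Lemma discrete_subspace_isolated_by_network (N : nat -> (X -> Prop) -> Prop) (D : X -> Prop) :
  network T (fun A => exists n, N n A) -> discrete_subspace T D ->
  forall x, D x -> exists n, isolated_by (N n) D x.
Proof.
  intros Hnet HD x Dx.
  destruct (HD x Dx) as [V [HV [Vx HVD]]].
  destruct (Hnet V x HV Vx) as [A [[n NA] [Ax AV]]].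
  exists n; split; [exact Dx|].
  exists A; split; [exact NA|]; split; [exact Ax|].
  intros z Az Dz. auto.
Qed.

Lemma no_countable_discrete_cover (J : Type) (h : J -> nat) (D : J -> X -> Prop) :
  hausdorff T -> baire T -> crowded -> inhabited X -> sigma_space T ->
  Injective h -> (forall i, discrete_subspace T (D i)) -> ~ (forall x, exists i, D i x).
Proof.
  intros Hhaus Hbaire Hcrowd Hinh [N [HN Hnet]] Hh HD Hcov.
  apply (baire_no_countable_closed_discrete_cover
           (k := fun p : J * nat => Cantor.to_nat (h (fst p), snd p))
           (S := fun p => isolated_by (N (snd p)) (D (fst p))) Hhaus Hbaire Hcrowd Hinh).
  - intros [i n] [j m] Heq.
    apply (f_equal Cantor.of_nat) in Heq. rewrite !Cantor.cancel_of_to in Heq.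
    injection Heq as Hij Hnm. cbn in Hij, Hnm. now rewrite (Hh i j Hij), Hnm.
  - intros [i n]. apply isolated_by_closed_discrete, HN.
  - intro x. destruct (Hcov x) as [i Dx].
    destruct (discrete_subspace_isolated_by_network Hnet (HD i) Dx) as [n Hn].
    now exists (i, n).
Qed.

Lemma card_lt_set_two_points (I : Type) (U : X -> Prop) :
  inhabited I -> card_lt_set I U -> exists y z, U y /\ U z /\ y <> z.
Proof.
  intros [i0] [_ Hnoinj]. apply NNPP; intro Hno.
  apply Hnoinj. exists (fun _ => i0).
  intros y z Uy Uz _. apply NNPP; intro Hyz. apply Hno; eauto.
Qed.

End Topology.

Lemma CH_dichotomy (I : Type) (f : I -> nat -> bool) :
  CH -> Injective f ->
  (exists h : I -> nat, Injective h) \/ (exists g : (nat -> bool) -> I, Injective g).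
Proof.
  intros HCH Hf.
  destruct (HCH (fun s => exists i, f i = s)) as [[F HF] | [g' [Hg' Hg'inj]]].
  - left. exists (fun i => F (f i)). intros i j Hij. apply Hf, HF; eauto.
  - right. destruct (choice (fun s i => f i = g' s) Hg') as [g Hg].
    exists g. intros s t Hst. apply Hg'inj. now rewrite <- Hg, <- Hg, Hst.
Qed.

Theorem mainTheorem12 :
  CH ->
  forall (X : Type) (T : topology X),
    inhabited X ->
    regular T -> separable T -> baire T -> sigma_space T ->
    ~ dis_lt_Delta T.
Proof.
  intros HCH X T [x0] Hreg Hsep Hbaire Hsig [J [D [HD [Hcov Hcard]]]].
  destruct (sigma_space_card_le_continuum Hreg Hsep Hsig) as [c Hc].
  destruct (Hcov x0) as [j0 _].
  destruct (Hcard _ (open_full T) (ex_intro _ x0 I)) as [[f [_ Hf]] HnoX].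
  destruct (CH_dichotomy (f := fun j => c (f j)) HCH (fun i j Hij => Hf i j (Hc _ _ Hij)))
    as [[h Hh] | [g Hg]].
  -
    assert (Hcrowd : crowded T).
    { intros U HU HUne. exact (card_lt_set_two_points (inhabits j0) (Hcard U HU HUne)). }
    exact (no_countable_discrete_cover (proj1 Hreg) Hbaire Hcrowd (inhabits x0) Hsig Hh HD Hcov).
  -
    apply HnoX. exists (fun x => g (c x)).
    intros x y _ _ Hxy. exact (Hc _ _ (Hg _ _ Hxy)).
Qed.
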